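(* Let $m,n\ge2$ be integers with $(m-1)(n-1)$ even. Then the rectangular grid graph $\mathcal R_{(m-1)\times(n-1)}$ (with either proper black/white coloring) satisfies \[|\mathcal{C}_B(\mathcal R_{(m-1)\times(n-1)})|=2^{(\gcd(m,n)-1)/2}.\]
   Context: $\mathcal R_{a\times b}$ is the graph with vertex set $\{1,\dots,b\}\times\{1,\dots,a\}\subset\mathbf{Z}^2$ and edges between vertices at Euclidean distance $1$. A channel of a graph is a vertex set $C$ such that every vertex is adjacent to an even number of vertices of $C$ (the empty set included). For a bipartite graph with black/white coloring, $\mathcal{C}_B$ denotes the set of channels consisting only of black vertices. *)

From mathcomp Require Import all_boot.
Set Implicit Arguments. Unset Strict Implicit. Unset Printing Implicit Defensive.

(* Vertices of R_{a x b}: pairs (x, y) with x in {1..b}, y in {1..a},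
   represented 0-indexed as 'I_b * 'I_a (x-1, y-1). *)
Definition gvert (a b : nat) := ('I_b * 'I_a)%type.

Definition grid_adj (a b : nat) : rel (gvert a b) :=
  fun u v =>
    ((u.2 == v.2) && (((u.1 : nat).+1 == v.1) || ((v.1 : nat).+1 == u.1)))
 || ((u.1 == v.1) && (((u.2 : nat).+1 == v.2) || ((v.2 : nat).+1 == u.2))).

Definition channel (a b : nat) (C : {set gvert a b}) : bool :=
  [forall v : gvert a b, ~~ odd #|[set w in C | grid_adj v w]|].

(* Proper black/white coloring; p selects which of the two colorings:
   v is black iff the parity of x+y equals p (0-indexing shifts x+y by 2,
   so parity is the same as in 1-indexed coordinates). *)
Definition black (a b : nat) (p : bool) (v : gvert a b) : bool :=
  odd (v.1 + v.2) == p.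

Definition chanB (a b : nat) (p : bool) : {set {set gvert a b}} :=
  [set C : {set gvert a b} | channel C && (C \subset [set v | black p v])].

From mathcomp Require Import all_boot all_algebra zify.
Set Implicit Arguments. Unset Strict Implicit. Unset Printing Implicit Defensive.
Import GRing.Theory.

(* Extend the indicator F of a channel by 0 to all of Z^2. The channel
   condition says that the four neighbours of each grid point sum to 0 mod 2;
   since the rows and columns bordering the grid vanish, F is determined by
   its first row, and d'Alembert's formula F(X, Y) = G(X + Y) + G(X - Y)
   holds with G even and 2n-periodic (the columns X = 0 and X = n vanish).
   The vanishing row Y = m makes G symmetric about m, hence 2m-periodic, so G
   is 2d-periodic with d = gcd(m, n); conversely every such G gives a channel.
   For a black channel G lives on one parity class p. As d = 2k + 1 is odd,
   G is then determined by its values at p, p + 2, ..., p + 2k, up to adding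
   1 on the whole class, which does not change F: this leaves 2^k channels. *)

Local Open Scope ring_scope.

Definition zeven (G : int -> bool) := forall z, G (- z) = G z.
Definition zperiodic (G : int -> bool) (Q : int) := forall z, G (z + Q) = G z.

Lemma zperiodicM G Q : zperiodic G Q -> forall q, zperiodic G (q * Q).
Proof.
move=> GQ [] k.
  elim: k => [|k IH] z; first by rewrite mul0r addr0.
  by rewrite -addn1 PoszD mulrDl mul1r addrA GQ IH.
elim: k => [|k IH] z; first by rewrite NegzE mulN1r -{1}(GQ (z - Q)) subrK.
have -> : Negz k.+1 * Q = Negz k * Q - Q by rewrite !NegzE; lia.
by rewrite addrA -{1}(GQ (z + _ - Q)) subrK IH.
Qed.

Lemma zperiodic_gcd G P Q :
  zperiodic G (2 * P) -> zperiodic G (2 * Q) -> zperiodic G (2 * gcdz P Q).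
Proof.
move=> GP GQ z; have [u [v <-]] := Bezoutz P Q.
have -> : 2 * (u * P + v * Q) = u * (2 * P) + v * (2 * Q) by lia.
by rewrite addrA (zperiodicM GQ) (zperiodicM GP).
Qed.

Definition zfold (P : nat) (z : int) : nat :=
  let u := absz (z %% (2 * P)%N%:Z)%Z in if (u <= P)%N then u else (2 * P - u)%N.

Lemma zfold_le P z : (zfold P z <= P)%N.
Proof. by rewrite /zfold; case: ifP; lia. Qed.

Lemma zfold_id P z : 0 <= z <= P%:Z -> zfold P z = absz z.
Proof.
case: P => [|P] hz; first by rewrite /zfold muln0 modz0; case: ifP; lia.
by rewrite /zfold modz_small; [case: ifP; lia | lia].
Qed.

Lemma zfoldDr P z : zfold P (z + 2 * P%:Z) = zfold P z.
Proof. by rewrite /zfold -PoszM modzDr. Qed.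

Lemma zfoldN P z : zfold P (- z) = zfold P z.
Proof.
case: P => [|P]; first by rewrite /zfold muln0 !modz0; do 2 case: ifP; lia.
have h0 : 0 <= (z %% (2 * P.+1)%N%:Z)%Z by apply: modz_ge0; lia.
have h1 : (z %% (2 * P.+1)%N%:Z)%Z < (2 * P.+1)%N%:Z by apply: ltz_pmod; lia.
rewrite /zfold -modzNm -(modzDr (- (z %% (2 * P.+1)%N%:Z)%Z) (2 * P.+1)%N%:Z).
have [->|nz] := eqVneq (z %% (2 * P.+1)%N%:Z)%Z 0; first by rewrite oppr0 add0r modzz.
by rewrite modz_small; [do 2 case: ifP; lia | lia].
Qed.

Lemma eq_zfold G P : (0 < P)%N ->
  zeven G -> zperiodic G (2 * P%:Z) -> forall z, G z = G (zfold P z).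
Proof.
case: P => // P _ Geven GP z.
have h0 : 0 <= (z %% (2 * P.+1)%N%:Z)%Z by apply: modz_ge0; lia.
have h1 : (z %% (2 * P.+1)%N%:Z)%Z < (2 * P.+1)%N%:Z by apply: ltz_pmod; lia.
have e : z = (z %% (2 * P.+1)%N%:Z)%Z + (z %/ (2 * P.+1)%N%:Z)%Z * (2 * P.+1%:Z) by lia.
rewrite {1}e (zperiodicM GP) /zfold; case: ifP => _; first by congr G; lia.
by rewrite -(zperiodicM GP (-1)) -Geven; congr G; lia.
Qed.

Lemma odd_zfold P z : (0 < P)%N -> odd (zfold P z) = odd (absz z).
Proof.
move=> P0; rewrite (@eq_zfold (fun z => odd (absz z)) P P0 _ _ z) ?absz_nat //.
- by move=> x; rewrite abszN.
- move=> x; lia.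
Qed.

Definition nbr_sum (F : int -> int -> bool) (X Y : int) : bool :=
  F (X + 1) Y (+) F (X - 1) Y (+) F X (Y + 1) (+) F X (Y - 1).

Lemma nbr_sum_rows_unique (F1 F2 : int -> int -> bool) (a b : nat) :
  (forall X Y, 1 <= X <= b%:Z -> 1 <= Y <= a%:Z -> nbr_sum F1 X Y = nbr_sum F2 X Y) ->
  (forall Y, F1 0 Y = F2 0 Y) -> (forall Y, F1 b.+1%:Z Y = F2 b.+1%:Z Y) ->
  (forall X, 0 <= X <= b.+1%:Z -> F1 X 0 = F2 X 0 /\ F1 X 1 = F2 X 1) ->
  forall X Y, 0 <= X <= b.+1%:Z -> 0 <= Y <= a.+1%:Z -> F1 X Y = F2 X Y.
Proof.
move=> eq_nbr eq_left eq_right eq_rows01.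
have rows : forall k : nat, (k <= a)%N -> forall X, 0 <= X <= b.+1%:Z ->
    F1 X k%:Z = F2 X k%:Z /\ F1 X (k%:Z + 1) = F2 X (k%:Z + 1).
  elim=> [|k IH] ka X hX; first exact: eq_rows01.
  have {}IH := IH (ltnW ka).
  have -> : k.+1%:Z = k%:Z + 1 by lia.
  split; first exact: (IH X hX).2.
  have [->|X0] := eqVneq X 0; first exact: eq_left.
  have [->|Xb] := eqVneq X b.+1%:Z; first exact: eq_right.
  have := eq_nbr X (k%:Z + 1) ltac:(lia) ltac:(lia).
  rewrite /nbr_sum addrK (IH (X + 1) ltac:(lia)).2 (IH (X - 1) ltac:(lia)).2 (IH X hX).1.
  by move/addIb/addbI.
move=> X Y hX hY; have [->|Y0] := eqVneq Y 0; first exact: (rows 0%N _ X hX).1.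
have -> : Y = (absz Y - 1)%N%:Z + 1 by lia.
exact: (rows (absz Y - 1)%N ltac:(lia) X hX).2.
Qed.

Definition dalembert (G : int -> bool) (X Y : int) : bool := G (X + Y) (+) G (X - Y).

Lemma nbr_sum_dalembert G X Y : nbr_sum (dalembert G) X Y = false.
Proof.
rewrite /nbr_sum /dalembert.
have -> : X + 1 + Y = X + (Y + 1) by lia.
have -> : X - 1 - Y = X - (Y + 1) by lia.
have -> : X + 1 - Y = X - (Y - 1) by lia.
have -> : X - 1 + Y = X + (Y - 1) by lia.
by do 4 case: (G _).
Qed.

Lemma dalembert_x0 G : zeven G -> forall Y, dalembert G 0 Y = false.
Proof. by move=> Geven Y; rewrite /dalembert add0r sub0r Geven addbb. Qed.

Lemma dalembert_y0 G X : dalembert G X 0 = false.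
Proof. by rewrite /dalembert subr0 addbb. Qed.

Lemma dalembert_xP G P :
  zeven G -> zperiodic G (2 * P) -> forall Y, dalembert G P Y = false.
Proof.
move=> Geven GP Y; rewrite /dalembert -(Geven (P - Y)) -(GP (- (P - Y))).
have -> : - (P - Y) + 2 * P = P + Y by lia.
by rewrite addbb.
Qed.

Lemma dalembert_yP G P : zperiodic G (2 * P) -> forall X, dalembert G X P = false.
Proof.
move=> GP X; rewrite /dalembert -(GP (X - P)).
have -> : X - P + 2 * P = X + P by lia.
by rewrite addbb.
Qed.

Lemma zperiodic_dalembert_row G N M : (0 < N)%N ->
  zeven G -> zperiodic G (2 * N%:Z) ->
  (forall X, 0 <= X <= N%:Z -> dalembert G X M = false) -> zperiodic G (2 * M).
Proof.
move=> N0 Geven GN row.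
have reflM z : G (M + z) = G (M - z).
  pose h z := G (M + z) == G (M - z).
  apply/eqP; rewrite -/(h z) (@eq_zfold h N N0) => [|x|x]; rewrite /h.
  - have := row (zfold N z)%:Z ltac:(have := zfold_le N z; lia).
    rewrite /dalembert -(Geven (_ - M)) opprB addrC.
    by case: (G _); case: (G _).
  - by rewrite opprK eq_sym.
  - rewrite addrA GN -(GN (M - (x + _))).
    by have -> : M - (x + 2 * N%:Z) + 2 * N%:Z = M - x by lia.
move=> z; have -> : z + 2 * M = M + (M + z) by lia.
by rewrite reflM opprD addNKr Geven.
Qed.

Fixpoint pot_of_row (F : int -> int -> bool) (j : nat) : bool :=
  if j is j'.+2 then F j'.+1%:Z 1 (+) pot_of_row F j' else false.

Lemma pot_of_row_parity (F : int -> int -> bool) (p : bool) :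
  (forall X Y, F X Y -> odd (absz (X + Y)) = p) -> forall j, pot_of_row F j -> odd j = p.
Proof.
move=> Fpar; elim/ltn_ind => -[|[|j]] // IH /=.
case FXY: (F _ _) => /=; first by have := Fpar _ _ FXY; lia.
by move/(IH j (leqnSn _)) <-; rewrite /= negbK.
Qed.

Section Potentials.
Variables (p : bool) (d k : nat).
Hypothesis d_eq : d = (2 * k + 1)%N.
Implicit Type t : {ffun 'I_k -> bool}.

Let d_gt0 : (0 < d)%N. Proof. by rewrite d_eq addn1. Qed.

(* The even, 2d-periodic potentials supported on the integers of parity p
   that vanish at p + 2k; [t] lists their values at p, p + 2, ..., p + 2(k-1). *)
Definition pot t (z : int) : bool :=
  (odd (zfold d z) == p) && nth false (fgraph t) (zfold d z)./2.

Lemma pot_even t : zeven (pot t).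
Proof. by move=> z; rewrite /pot zfoldN. Qed.

Lemma pot_periodic t : zperiodic (pot t) (2 * d%:Z).
Proof. by move=> z; rewrite /pot zfoldDr. Qed.

Lemma pot_periodic_dvd t (n : nat) : (d %| n)%N -> zperiodic (pot t) (2 * n%:Z).
Proof.
move=> /dvdnP[q ->]; rewrite PoszM mulrCA.
exact: zperiodicM (pot_periodic t) q.
Qed.

Lemma pot_parity t z : pot t z -> odd (absz z) = p.
Proof. by rewrite /pot odd_zfold // => /andP[/eqP]. Qed.

Lemma pot_at t (i : nat) : (i <= k)%N ->
  pot t (p + 2 * i)%N%:Z = nth false (fgraph t) i.
Proof.
move=> ik; rewrite /pot zfold_id ?absz_nat; last by case: p d_eq; lia.
have -> : odd (p + 2 * i) = p by rewrite oddD mul2n odd_double addbF oddb.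
have -> : (p + 2 * i)./2 = i by case: p; lia.
by rewrite eqxx.
Qed.

Lemma dalembert_pot_normal G :
  zeven G -> zperiodic G (2 * d%:Z) -> (forall z, G z -> odd (absz z) = p) ->
  exists t, forall X Y, dalembert (pot t) X Y = dalembert G X Y.
Proof.
move=> Geven Gd Gpar; pose c := G (p + 2 * k)%N%:Z.
exists [ffun i : 'I_k => G (p + 2 * i)%N%:Z (+) c].
have shift z : pot [ffun i : 'I_k => G (p + 2 * i)%N%:Z (+) c] z
               = G z (+) (c && (odd (absz z) == p)).
  rewrite /pot (eq_zfold d_gt0 Geven Gd) odd_zfold //.
  have := zfold_le d z; set j := zfold d z => jd.
  have [pz|npz] := eqVneq (odd (absz z)) p; last first.
    have Gj : G j%:Z = false.
      by apply/negbTE/negP => /Gpar; rewrite absz_nat odd_zfold //; apply/eqP.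
    by rewrite Gj andbF.
  have ej : j = (p + 2 * j./2)%N.
    by rewrite -{1}(odd_double_half j) odd_zfold // pz mul2n.
  have [lt|ge] := ltnP j./2 k.
    rewrite (nth_fgraph_ord false (Ordinal lt)) ffunE /= -ej /c.
    by case: (G _); case: (G _).
  have jk : j./2 = k by lia.
  rewrite nth_default ?size_tuple ?card_ord ?jk // ej jk.
  by rewrite /c; case: (G _).
move=> X Y; rewrite /dalembert !shift.
have -> : odd (absz (X - Y)) = odd (absz (X + Y)) by lia.
by case: (c && _); case: (G _); case: (G _).
Qed.

End Potentials.

Lemma sum_nat_unique (T : finType) (P : pred T) :
  (forall x y, P x -> P y -> x = y) -> (\sum_(w : T) P w)%N = [exists w, P w] :> nat.
Proof.
move=> P_uniq; case: existsP => [[w0 Pw0]|noP].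
  rewrite (bigD1 w0) //= Pw0 big1 ?addn0 // => w nw.
  by case Pw: (P w); rewrite // (P_uniq _ _ Pw Pw0) eqxx in nw.
by rewrite big1 // => w _; case Pw: (P w) => //; case: noP; exists w.
Qed.

Local Notation xZ v := ((nat_of_ord v.1)%:Z + 1)%R.
Local Notation yZ v := ((nat_of_ord v.2)%:Z + 1)%R.

Section GridInZ2.
Variables a b : nat.
Implicit Types (C : {set gvert a b}) (v : gvert a b) (X Y : int).

Definition memZ C X Y : bool :=
  [exists w : gvert a b, (w \in C) && ((xZ w == X) && (yZ w == Y))].

Lemma vertZ_inj v w : xZ v = xZ w -> yZ v = yZ w -> v = w.
Proof. by case: v w => [x y] [x' y'] /= e1 e2; congr pair; apply: ord_inj; lia. Qed.

Lemma memZ_vert C v : memZ C (xZ v) (yZ v) = (v \in C).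
Proof.
apply/existsP/idP; last by move=> vC; exists v; rewrite vC !eqxx.
by case=> w /and3P[wC /eqP e1 /eqP e2]; rewrite -(vertZ_inj e1 e2).
Qed.

Lemma memZ_box C X Y : memZ C X Y -> [&& 1 <= X <= b%:Z & 1 <= Y <= a%:Z].
Proof.
case/existsP=> -[x y] /and3P[_ /eqP <- /eqP <-] /=.
by move: (ltn_ord x) (ltn_ord y); lia.
Qed.

Lemma vertZ_exists X Y :
  1 <= X <= b%:Z -> 1 <= Y <= a%:Z -> {v : gvert a b | xZ v = X & yZ v = Y}.
Proof.
move=> hX hY; have hx : (absz (X - 1) < b)%N by lia.
have hy : (absz (Y - 1) < a)%N by lia.
by exists (Ordinal hx, Ordinal hy) => /=; lia.
Qed.

Lemma memZ_set (P : int -> int -> bool) X Y :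
  memZ [set v | P (xZ v) (yZ v)] X Y = [&& 1 <= X <= b%:Z, 1 <= Y <= a%:Z & P X Y].
Proof.
apply/idP/idP => [mP|/and3P[hX hY]].
  have /andP[-> ->] /= := memZ_box mP; case/existsP: mP => w.
  by rewrite inE => /and3P[Pw /eqP <- /eqP <-].
have [v <- <-] := vertZ_exists hX hY => Pv.
by apply/existsP; exists v; rewrite inE Pv !eqxx.
Qed.

Lemma grid_adj_nat v w : grid_adj v w =
  (((xZ w == (xZ v + 1)%R) && (yZ w == yZ v))
   + ((xZ w == (xZ v - 1)%R) && (yZ w == yZ v))
   + ((xZ w == xZ v) && (yZ w == (yZ v + 1)%R))
   + ((xZ w == xZ v) && (yZ w == (yZ v - 1)%R)))%N :> nat.
Proof. rewrite /grid_adj -!val_eqE /=; lia. Qed.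

Lemma odd_card_adj C v :
  odd #|[set w in C | grid_adj v w]| = nbr_sum (memZ C) (xZ v) (yZ v).
Proof.
rewrite -sum1_card big_mkcond /=.
rewrite (eq_bigr (fun w => (w \in C) * grid_adj v w)%N); last first.
  by move=> w _; rewrite inE mulnb; case: (_ && _).
under eq_bigr => w _ do rewrite grid_adj_nat !mulnDr !mulnb.
rewrite !big_split /= !sum_nat_unique ?oddD ?oddb //;
  by move=> w w' /and3P[_ /eqP e1 /eqP e2] /and3P[_ /eqP e1' /eqP e2'];
     apply: vertZ_inj; rewrite ?e1 ?e2 ?e1' ?e2'.
Qed.

Lemma channelP C :
  reflect (forall X Y, 1 <= X <= b%:Z -> 1 <= Y <= a%:Z -> ~~ nbr_sum (memZ C) X Y)
          (channel C).
Proof.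
apply: (iffP forallP) => [ch X Y hX hY | ch [x y]]; last first.
  by rewrite odd_card_adj; apply: ch => /=; move: (ltn_ord x) (ltn_ord y); lia.
by have [v <- <-] := vertZ_exists hX hY; rewrite -odd_card_adj.
Qed.

Lemma memZ_black p C X Y :
  C \subset [set v | black p v] -> memZ C X Y -> odd (absz (X + Y)) = p.
Proof.
move=> /subsetP Cblack /existsP[w /and3P[wC /eqP <- /eqP <-]].
by have := Cblack w wC; rewrite inE /black => /eqP <-; lia.
Qed.

Definition dalembert_set (G : int -> bool) : {set gvert a b} :=
  [set v | dalembert G (xZ v) (yZ v)].

Lemma memZ_dalembert_set G X Y :
  zeven G -> zperiodic G (2 * b.+1%:Z) -> zperiodic G (2 * a.+1%:Z) ->
  0 <= X <= b.+1%:Z -> 0 <= Y <= a.+1%:Z -> memZ (dalembert_set G) X Y = dalembert G X Y.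
Proof.
move=> Geven Gb Ga hX hY; rewrite memZ_set.
have [->|X0] := eqVneq X 0; first by rewrite dalembert_x0.
have [->|Xb] := eqVneq X b.+1%:Z; first by rewrite (dalembert_xP Geven Gb) !andbF.
have [->|Y0] := eqVneq Y 0; first by rewrite dalembert_y0 !andbF.
have [->|Ya] := eqVneq Y a.+1%:Z; first by rewrite (dalembert_yP Ga) !andbF.
by have /andP[-> ->] : (1 <= X <= b%:Z) && (1 <= Y <= a%:Z) by lia.
Qed.

Lemma channel_dalembert_set G :
  zeven G -> zperiodic G (2 * b.+1%:Z) -> zperiodic G (2 * a.+1%:Z) ->
  channel (dalembert_set G).
Proof.
move=> Geven Gb Ga; apply/channelP => X Y hX hY.
rewrite /nbr_sum !memZ_dalembert_set //; try lia.
by have := nbr_sum_dalembert G X Y; rewrite /nbr_sum => ->.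
Qed.

Section PotentialSets.
Variables (p : bool) (d k : nat).
Hypothesis d_eq : d = (2 * k + 1)%N.

Lemma dalembert_set_pot_black (t : {ffun 'I_k -> bool}) :
  dalembert_set (pot p d t) \subset [set v | black p v].
Proof.
apply/subsetP => -[x y]; rewrite !inE /dalembert /black /=.
case Gs: (pot _ _ t _) => /=; first by move=> _; have := pot_parity d_eq Gs; lia.
by move/(pot_parity d_eq); lia.
Qed.

Lemma dalembert_set_pot_inj : (d <= b.+1)%N -> (0 < a)%N ->
  injective (fun t : {ffun 'I_k -> bool} => dalembert_set (pot p d t)).
Proof.
move=> db a0 t1 t2 /= eq_sets.
pose D z := pot p d t1 z (+) pot p d t2 z.
have D_step (x : nat) : (1 <= x <= b)%N -> D (x.+1)%:Z = D x.-1%:Z.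
  move=> hx; have := congr1 (fun C => memZ C x%:Z 1) eq_sets.
  rewrite /= !memZ_set /dalembert /D.
  have -> : 1 <= x%:Z <= b%:Z by lia.
  have -> : (1 : int) <= 1 <= a%:Z by lia.
  have -> : x%:Z + 1 = x.+1%:Z by lia.
  have -> : x%:Z - 1 = x.-1%:Z by lia.
  by do 4 case: (pot _ _ _ _).
have D_top : D (p + 2 * k)%N%:Z = false.
  by rewrite /D !pot_at // !nth_default ?size_tuple ?card_ord.
have D_zero (j : nat) : (j <= k)%N -> D (p + 2 * (k - j))%N%:Z = false.
  elim: j => [|j IH] jk; first by rewrite subn0 D_top.
  have := D_step (p + 2 * (k - j)).-1 ltac:(lia).
  have -> : (p + 2 * (k - j)).-1.+1 = (p + 2 * (k - j))%N by lia.
  have -> : (p + 2 * (k - j)).-1.-1 = (p + 2 * (k - j.+1))%N by lia.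
  by move=> <-; apply: IH; apply: ltnW.
apply/ffunP => i; have := D_zero (k - i)%N (leq_subr _ _).
rewrite subKn 1?ltnW // /D !pot_at 1?ltnW // !(nth_fgraph_ord false i).
by case: (t1 i); case: (t2 i).
Qed.

End PotentialSets.

Definition row_pot C (z : int) : bool := pot_of_row (memZ C) (zfold b.+1 z).

Lemma row_pot_even C : zeven (row_pot C).
Proof. by move=> z; rewrite /row_pot zfoldN. Qed.

Lemma row_pot_periodic C : zperiodic (row_pot C) (2 * b.+1%:Z).
Proof. by move=> z; rewrite /row_pot zfoldDr. Qed.

Lemma row_pot_parity p C :
  C \subset [set v | black p v] -> forall z, row_pot C z -> odd (absz z) = p.
Proof.
move=> Cblack z /(pot_of_row_parity (fun X Y => memZ_black Cblack)).
by rewrite odd_zfold.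
Qed.

Lemma memZ_outside C X Y : ~~ [&& 1 <= X <= b%:Z & 1 <= Y <= a%:Z] -> memZ C X Y = false.
Proof. by move=> out; apply/negbTE; apply: contra out; apply: memZ_box. Qed.

(* d'Alembert's formula: a channel is determined by its first row, from
   which [row_pot] reads off the potential. *)
Lemma channel_memZ_dalembert C : channel C -> forall X Y,
  0 <= X <= b.+1%:Z -> 0 <= Y <= a.+1%:Z -> memZ C X Y = dalembert (row_pot C) X Y.
Proof.
move=> /channelP ch; apply: nbr_sum_rows_unique.
- by move=> X Y hX hY; rewrite nbr_sum_dalembert; apply/negbTE/ch.
- by move=> Y; rewrite (dalembert_x0 (row_pot_even C)) memZ_outside //; lia.
- move=> Y; rewrite (dalembert_xP (row_pot_even C) (row_pot_periodic C)).
  by rewrite memZ_outside //; lia.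
move=> X hX; rewrite dalembert_y0 memZ_outside; last by lia.
split=> //; have [X0|X0] := boolP ((X == 0) || (X == b.+1%:Z)).
  rewrite memZ_outside; last by lia.
  case/orP: X0 => /eqP ->; first by rewrite (dalembert_x0 (row_pot_even C)).
  by rewrite (dalembert_xP (row_pot_even C) (row_pot_periodic C)).
rewrite /dalembert /row_pot !zfold_id; try lia.
have -> : absz (X + 1) = (absz X).-1.+2 by lia.
have -> : absz (X - 1) = (absz X).-1 by lia.
rewrite /= addbK; congr memZ; lia.
Qed.

Lemma channel_row_pot_periodic C : channel C -> zperiodic (row_pot C) (2 * a.+1%:Z).
Proof.
move=> ch; apply: (@zperiodic_dalembert_row _ b.+1) => //.
- exact: row_pot_even.
- exact: row_pot_periodic.
move=> X hX; rewrite -channel_memZ_dalembert //; last by lia.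
by rewrite memZ_outside //; lia.
Qed.

Lemma chanB_dalembert_set_pot p d k : d = (2 * k + 1)%N -> d = gcdn a.+1 b.+1 ->
  chanB a b p = [set dalembert_set (pot p d t) | t : {ffun 'I_k -> bool}].
Proof.
move=> d_eq d_gcd; have [da db] : (d %| a.+1)%N /\ (d %| b.+1)%N.
  by rewrite d_gcd dvdn_gcdl dvdn_gcdr.
apply/setP => C; rewrite inE; apply/andP/imsetP => [[ch Cblack]|[t _ ->]].
  have G_2d : zperiodic (row_pot C) (2 * d%:Z).
    rewrite d_gcd; apply: (@zperiodic_gcd _ a.+1%:Z b.+1%:Z).
      exact: channel_row_pot_periodic.
    exact: row_pot_periodic.
  have [t eq_dal] :=
    dalembert_pot_normal d_eq (row_pot_even C) G_2d (row_pot_parity Cblack).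
  exists t => //; apply/setP => -[x y]; rewrite -!memZ_vert /=.
  have [hx hy] := (ltn_ord x, ltn_ord y).
  rewrite channel_memZ_dalembert -?eq_dal ?memZ_dalembert_set //; try lia;
    [exact: pot_even | exact: pot_periodic_dvd..].
split; last exact: dalembert_set_pot_black.
by apply: channel_dalembert_set; [exact: pot_even | exact: pot_periodic_dvd..].
Qed.

End GridInZ2.

Local Close Scope ring_scope.

Lemma odd_gcdn m n : odd m || odd n -> odd (gcdn m n).
Proof.
apply: contraLR; rewrite negb_or -!dvdn2 => d2.
by rewrite (dvdn_trans d2 (dvdn_gcdl m n)) (dvdn_trans d2 (dvdn_gcdr m n)).
Qed.

Theorem corollary4p8 (m n : nat) (hm : 2 <= m) (hn : 2 <= n)
  (heven : ~~ odd ((m - 1) * (n - 1))) (p : bool) :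
  #|chanB (m - 1) (n - 1) p| = 2 ^ ((gcdn m n - 1) %/ 2).
Proof.
set d := gcdn m n; set k := (d - 1) %/ 2.
have d_odd : odd d by apply: odd_gcdn; move: heven; rewrite oddM; lia.
have d_eq : d = 2 * k + 1 by rewrite /k; lia.
have d_gcd : d = gcdn (m - 1).+1 (n - 1).+1 by rewrite !subn1 !prednK; lia.
have dn : d <= n by apply: dvdn_leq; [lia | exact: dvdn_gcdr].
rewrite (chanB_dalembert_set_pot p d_eq d_gcd) card_imset; last first.
  by apply: dalembert_set_pot_inj; lia.
by rewrite card_ffun card_bool card_ord.
Qed.
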